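(* Let $p$ be an odd prime and $a,s$ natural numbers with $a<p$. Let $\omega=\{\omega_1,\ldots,\omega_{sp}\}$ be a set partition of $\{1,\ldots,asp\}$ into $sp$ sets of size $a$. Then $\omega$ is fixed by $R_{as}$ if and only if there exist a set partition $\delta=\{\delta_1,\ldots,\delta_s\}$ of $\{1,\ldots,as\}$ into $s$ sets of size $a$ and $s$ sets $A_1,\ldots,A_s$ of $\omega$ such that for all $i\in\{1,\ldots,s\}$ and $j\in\{1,\ldots,as\}$, $$|A_i\cap\mathcal{O}_j|=\begin{cases}1 & \text{if } j\in\delta_i,\\ 0 & \text{if } j\notin\delta_i,\end{cases}$$ and $$\omega=\{A_1,A_1\sigma,\ldots,A_1\sigma^{p-1},A_2,\ldots,A_2\sigma^{p-1},\ldots,A_s,\ldots,A_s\sigma^{p-1}\}.$$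
   Context: For $j\geq 1$ let $z_j=(p(j-1)+1,p(j-1)+2,\ldots,pj)$, a $p$-cycle, and $\mathcal{O}_j=\{p(j-1)+1,\ldots,pj\}$ its support. Let $\sigma=z_1z_2\cdots z_{as}\in S_{asp}$ and $R_{as}=\langle\sigma\rangle$. Permutations act on the right, and $S_{asp}$ acts on set partitions of $\{1,\ldots,asp\}$ by acting on each element. *)

From mathcomp Require Import all_boot all_fingroup.
From mathcomp Require Import zify.
Set Implicit Arguments. Unset Strict Implicit. Unset Printing Implicit Defensive.

(* Points 1..m*p of the paper are represented 0-indexed by 'I_(m*p):
   paper point x+1  <->  ordinal x.  Block O_j (j = 1..m) corresponds to
   ordinal j-1 : 'I_m and is { x | x %/ p = j-1 }. *)

Lemma zcyc_lt m p (x : 'I_(m * p)) : (x %/ p) * p + (x %% p).+1 %% p < m * p.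
Proof.
have xlt := ltn_ord x.
have p0 : 0 < p.
  by move: xlt; move: (nat_of_ord x) => n; case: (posnP p) => // ->; rewrite muln0.
have q : x %/ p < m by rewrite ltn_divLR.
have r : (x %% p).+1 %% p < p by rewrite ltn_mod.
have : (x %/ p).+1 * p <= m * p by rewrite leq_mul2r q orbT.
rewrite mulSn. lia.
Qed.

(* the map x -> next point in the same block (cyclically), i.e. z_1 ... z_m *)
Definition zcyc_fun m p (x : 'I_(m * p)) : 'I_(m * p) := Ordinal (zcyc_lt x).

Lemma zcyc_inj m p : injective (@zcyc_fun m p).
Proof.
move=> x y /(congr1 val) /= E.
have p0 : 0 < p.
  by move: (ltn_ord x); move: (nat_of_ord x) => n; case: (posnP p) => // ->; rewrite muln0.
have Hd z : ((z %/ p) * p + (z %% p).+1 %% p) %/ p = z %/ p.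
  by rewrite divnMDl // [X in _ + X]divn_small ?addn0 // ltn_mod.

have Hm z : ((z %/ p) * p + (z %% p).+1 %% p) %% p = (z %% p).+1 %% p.
  by rewrite modnMDl modn_mod.
have Eq : x %/ p = y %/ p by rewrite -(Hd x) -(Hd y) E.
have Er : (x %% p).+1 %% p = (y %% p).+1 %% p by rewrite -(Hm x) -(Hm y) E.
have Er' : x %% p = y %% p.
  move: Er; rewrite -[(x %% p).+1]addn1 -[(y %% p).+1]addn1 => /eqP; rewrite eqn_modDr => /eqP.
  by rewrite !modn_mod.
apply: val_inj => /=; by rewrite (divn_eq x p) (divn_eq y p) Eq Er'.
Qed.

Definition sigma_perm m p : {perm 'I_(m * p)} := perm (@zcyc_inj m p).

Definition R_grp m p : {group {perm 'I_(m * p)}} := <[sigma_perm m p]>%G.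

(* the orbit/support O_j, for j : 'I_m (paper's index j+1) *)
Definition Oblock m p (j : 'I_m) : {set 'I_(m * p)} :=
  [set x : 'I_(m * p) | x %/ p == j].

Definition setpart_act (T : finType) (P : {set {set T}}) (g : {perm T}) :
  {set {set T}} := [set (fun x => g x) @: (B : {set T}) | B in P].

Definition setpart_k_a (T : finType) (P : {set {set T}}) (D : {set T})
  (k a : nat) : bool :=
  [&& partition P D, #|P| == k & [forall B in P, #|B| == a]].

From mathcomp Require Import all_boot all_fingroup.
Set Implicit Arguments. Unset Strict Implicit. Unset Printing Implicit Defensive.

(* A power of sigma maps every block O_j onto itself, cycling it.  A member B
   of an invariant partition has a < p points, so no sigma^d with 0 < d < p
   fixes B: it would contain the orbit of a point under sigma^d, which is a
   whole block because d is prime to p.  Hence the R-orbit of B has exactly p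
   members and the orbits cut omega into s classes.  Two members of omega
   meeting a common block differ by a power of sigma (the partition is
   disjoint), so an orbit representative A_i meets each block at most once and
   distinct representatives meet disjoint sets of blocks delta_i. *)

Lemma eqn_modMl_coprime p d m1 m2 :
  coprime p d -> (d * m1 == d * m2 %[mod p]) = (m1 == m2 %[mod p]).
Proof.
move=> cop_pd; wlog le_m21 : m1 m2 / m2 <= m1.
  move=> W; case: (leqP m2 m1) => [/W // | /ltnW/W].
  by rewrite eq_sym [in RHS]eq_sym.
by rewrite !eqn_mod_dvd ?leq_mul2l ?le_m21 ?orbT // -mulnBr Gauss_dvdr.
Qed.

Lemma block_of_lt n p (x : 'I_(n * p)) : x %/ p < n.
Proof.
have := ltn_ord x; move: (nat_of_ord x) => m.
by case: (posnP p) => [-> | p_gt0]; rewrite ?muln0 // ltn_divLR.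
Qed.

Definition block_of n p (x : 'I_(n * p)) : 'I_n := Ordinal (block_of_lt x).
Arguments block_of {n p}.

Lemma mem_Oblock n p (x : 'I_(n * p)) j : (x \in Oblock p j) = (block_of x == j).
Proof. by rewrite inE -val_eqE. Qed.

Lemma card_setI_Oblock n p (A : {set 'I_(n * p)}) j :
  {in A &, injective (@block_of n p)} -> #|A :&: Oblock p j| = (j \in block_of @: A).
Proof.
move=> inj_block; case: (boolP (j \in _)) => [/imsetP[x xA ->] | jA].
  rewrite (_ : _ :&: _ = [set x]) ?cards1 //; apply/setP => y.
  rewrite in_setI mem_Oblock in_set1; apply/andP/eqP => [[yA /eqP] | ->].
    exact: inj_block.
  by rewrite xA eqxx.
rewrite (_ : _ :&: _ = set0) ?cards0 //; apply/setP => y.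
rewrite in_setI mem_Oblock in_set0; apply/negbTE/andP => -[yA /eqP jy].
by move: jA; rewrite -jy imset_f.
Qed.

Section Sigma.

Variables n p : nat.
Hypothesis p_gt0 : 0 < p.
Local Notation T := 'I_(n * p).
Local Notation sigma := (sigma_perm n p).

Lemma sigmaXE k (x : T) : val ((sigma ^+ k)%g x) = x %/ p * p + (x %% p + k) %% p.
Proof.
elim: k => [|k IHk]; first by rewrite expg0 perm1 addn0 modn_mod -divn_eq.
rewrite expgSr permM /sigma_perm permE /= IHk.
rewrite divnMDl // (divn_small (ltn_pmod _ p_gt0)) addn0.
by rewrite modnMDl modn_mod -addn1 modnDml addn1 addnS.
Qed.

Lemma block_of_sigmaX k (x : T) : block_of ((sigma ^+ k)%g x) = block_of x.
Proof.
apply: val_inj => /=; rewrite sigmaXE divnMDl //.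
by rewrite (divn_small (ltn_pmod _ p_gt0)) addn0.
Qed.

Lemma eq_sigmaX (x : T) k l :
  ((sigma ^+ k)%g x == (sigma ^+ l)%g x) = (k == l %[mod p]).
Proof. by rewrite -val_eqE !sigmaXE eqn_add2l eqn_modDl. Qed.

Lemma sigmaX_transitive (x y : T) :
  block_of x = block_of y -> exists k : 'I_p, (sigma ^+ k)%g x = y.
Proof.
move/(congr1 val) => /= eq_xy.
have lt_kp : (y %% p + (p - x %% p)) %% p < p by rewrite ltn_mod.
exists (Ordinal lt_kp); apply: val_inj; rewrite sigmaXE /= eq_xy modnDmr addnA.
have lt_xp := ltn_pmod x p_gt0.
by rewrite addnAC subnKC ?(ltnW lt_xp) // modnDl modn_mod -divn_eq.
Qed.

Definition rot k (B : {set T}) : {set T} := (fun x => (sigma ^+ k)%g x) @: B.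

Lemma rotD k l B : rot k (rot l B) = rot (l + k) B.
Proof. by rewrite /rot -imset_comp; apply: eq_imset => x; rewrite expgD permM. Qed.

Lemma rot_mod k B : rot (k %% p) B = rot k B.
Proof.
suff sigma_p : (sigma ^+ p = 1)%g by rewrite /rot (expg_mod _ sigma_p).
apply/permP => x; rewrite perm1; apply/eqP.
by have := eq_sigmaX x p 0; rewrite expg0 perm1 modnn mod0n => ->.
Qed.

Lemma rot0 B : rot 0 B = B.
Proof. by rewrite /rot -[RHS]imset_id; apply: eq_imset => x; rewrite expg0 perm1. Qed.

Lemma card_rot k B : #|rot k B| = #|B|.
Proof. exact/card_imset/perm_inj. Qed.

Lemma rot_fixed_card d B x : coprime p d -> rot d B = B -> x \in B -> p <= #|B|.
Proof.
move=> cop_pd fixB xB.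
have fixBm m : rot (d * m) B = B.
  by elim: m => [|m IHm]; rewrite ?muln0 ?rot0 // mulnS -rotD fixB IHm.
have inj_orbit : injective (fun m : 'I_p => (sigma ^+ (d * m))%g x).
  move=> m1 m2 /eqP; rewrite eq_sigmaX eqn_modMl_coprime // !modn_small //.
  by move/eqP/val_inj.
have sub_orbit : [set (sigma ^+ (d * m))%g x | m : 'I_p] \subset B.
  by apply/subsetP => _ /imsetP[m _ ->]; rewrite -(fixBm m); apply: imset_f.
by have := subset_leq_card sub_orbit; rewrite card_imset // card_ord.
Qed.

Lemma rot_inj B : prime p -> B != set0 -> #|B| < p -> injective (fun k : 'I_p => rot k B).
Proof.
move=> p_prime /set0Pn[x xB] lt_Bp.
suff no_fix k l : k < l < p -> rot k B <> rot l B.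
  move=> k l /= eq_kl; apply: val_inj; case: (ltngtP k l) => // [lt_kl | lt_lk].
  - by have := no_fix k l; rewrite lt_kl ltn_ord => /(_ isT eq_kl).
  - by have := no_fix l k; rewrite lt_lk ltn_ord => /(_ isT (esym eq_kl)).
move=> /andP[lt_kl lt_lp] eq_kl.
have cop : coprime p (l - k).
  rewrite prime_coprime //; apply/negP => /dvdn_leq; rewrite subn_gt0 lt_kl => /(_ isT).
  by rewrite leqNgt (leq_ltn_trans (leq_subr k l) lt_lp).
have fix_kB : rot (l - k) (rot k B) = rot k B by rewrite rotD subnKC ?(ltnW lt_kl) // eq_kl.
by have := rot_fixed_card cop fix_kB (imset_f _ xB); rewrite card_rot leqNgt lt_Bp.
Qed.

Definition rot_orbit B := [set rot k B | k : 'I_p].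

Lemma mem_rot_orbit k B : rot k B \in rot_orbit B.
Proof. by rewrite -rot_mod; apply: (imset_f _ (_ : Ordinal (ltn_pmod k p_gt0) \in _)). Qed.

Lemma rot_orbit_id B : B \in rot_orbit B.
Proof. by rewrite -[X in X \in _]rot0 mem_rot_orbit. Qed.

Lemma rot_orbit_rot k B : rot_orbit (rot k B) = rot_orbit B.
Proof.
suff sub_orbit k' B' : rot_orbit (rot k' B') \subset rot_orbit B'.
  have undo_k : rot (p - k %% p) (rot k B) = B.
    by rewrite rotD -rot_mod -modnDml subnKC ?modnn ?rot0 // ltnW // ltn_pmod.
  by apply/eqP; rewrite eqEsubset sub_orbit -{1}undo_k sub_orbit.
by apply/subsetP => _ /imsetP[l _ ->]; rewrite rotD mem_rot_orbit.
Qed.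

Lemma rot_orbit_eq B C : C \in rot_orbit B -> rot_orbit C = rot_orbit B.
Proof. by case/imsetP => k _ ->; apply: rot_orbit_rot. Qed.

Lemma rot_orbits_fixed (I : finType) (A : I -> {set T}) g :
  g \in R_grp n p ->
  setpart_act [set rot k (A i) | i : I, k : 'I_p] g = [set rot k (A i) | i : I, k : 'I_p].
Proof.
case/cycleP => m ->; apply/eqP.
rewrite eqEcard card_imset ?leqnn ?andbT; last exact/imset_inj/perm_inj.
apply/subsetP => _ /imsetP[_ /imset2P[i k _ _ ->] ->].
rewrite -[_ @: rot k _]/(rot m _) rotD -rot_mod.
exact: (imset2_f _ (_ : i \in _) (_ : Ordinal (ltn_pmod (k + m) p_gt0) \in _)).
Qed.

Section RotStable.

Variable omega : {set {set T}}.
Hypothesis rot_stable : forall k B, B \in omega -> rot k B \in omega.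

Lemma partition_rot_orbits : partition [set rot_orbit B | B in omega] omega.
Proof.
apply/and3P; split.
- apply/eqP/setP => C; apply/bigcupP/idP => [[_ /imsetP[B Bo ->] /imsetP[k _ ->]] | Co].
    exact: rot_stable.
  by exists (rot_orbit C); [apply: imset_f | apply: rot_orbit_id].
- apply/trivIsetP => _ _ /imsetP[B1 _ ->] /imsetP[B2 _ ->].
  rewrite -setI_eq0; apply: contraNT => /set0Pn[C /setIP[C1 C2]].
  by rewrite -(rot_orbit_eq C1) -(rot_orbit_eq C2).
- by apply/imsetP => -[B _ orbit_B0]; move: (rot_orbit_id B); rewrite -orbit_B0 inE.
Qed.

Variable a : nat.
Hypothesis p_prime : prime p.
Hypothesis omega_part : partition omega [set: T].
Hypothesis omega_card : forall B, B \in omega -> #|B| = a.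
Hypothesis a_lt_p : a < p.

Let omega_triv : trivIset omega.
Proof. by case/and3P: omega_part. Qed.

Lemma rot_inj_omega B : B \in omega -> injective (fun k : 'I_p => rot k B).
Proof.
move=> Bo; apply: rot_inj; rewrite ?omega_card //.
by apply: contraTneq Bo => ->; case/and3P: omega_part.
Qed.

Lemma card_rot_orbits : #|omega| = #|[set rot_orbit B | B in omega]| * p.
Proof.
apply: card_uniform_partition partition_rot_orbits => _ /imsetP[B Bo ->].
by rewrite card_imset ?card_ord //; apply: rot_inj_omega.
Qed.

Lemma same_block_rot B C x y : B \in omega -> C \in omega -> x \in B -> y \in C ->
  block_of x = block_of y -> exists2 k : 'I_p, (sigma ^+ k)%g x = y & C = rot k B.
Proof.
move=> Bo Co xB yC /sigmaX_transitive[k kxy]; exists k => //.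
rewrite -(def_pblock omega_triv Co yC); apply: def_pblock; first exact: omega_triv.
  exact: rot_stable.
by rewrite -kxy; apply: imset_f.
Qed.

Lemma block_of_inj B : B \in omega -> {in B &, injective block_of}.
Proof.
move=> Bo x y xB yB /(same_block_rot Bo Bo xB yB)[k kxy fixB].
have k0 : k = Ordinal p_gt0 by apply: (rot_inj_omega Bo); rewrite /= rot0.
by rewrite -kxy k0 expg0 perm1.
Qed.

Lemma rot_orbit_block B C x y : B \in omega -> C \in omega -> x \in B -> y \in C ->
  block_of x = block_of y -> rot_orbit C = rot_orbit B.
Proof. by move=> Bo Co xB yC /(same_block_rot Bo Co xB yC)[k _ ->]; apply: rot_orbit_rot. Qed.

Lemma exists_rot_orbit_reps s : #|omega| = s * p ->
  exists A : 'I_s -> {set T},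
    [/\ forall i, A i \in omega,
        forall i j, rot_orbit (A i) = rot_orbit (A j) -> i = j &
        omega = [set rot k (A i) | i : 'I_s, k : 'I_p]].
Proof.
move=> card_omega; set orbits := [set rot_orbit B | B in omega].
have card_orbits : #|orbits| = s.
  by apply/eqP; rewrite -(eqn_pmul2r p_gt0) -card_rot_orbits card_omega.
pose e i := enum_val (cast_ord (esym card_orbits) i).
pose A i := odflt set0 [pick B in e i].
have AP i : A i \in omega /\ rot_orbit (A i) = e i.
  have /imsetP[B Bo eiB] : e i \in orbits by apply: enum_valP.
  rewrite /A; case: pickP => [C | /(_ B)]; last by rewrite eiB rot_orbit_id.
  rewrite eiB => /[dup] /rot_orbit_eq -> /imsetP[k _ ->]; split=> //; exact: rot_stable.
exists A; split=> [i | i j | ]; first by case: (AP i).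
  by rewrite (proj2 (AP i)) (proj2 (AP j)) => /enum_val_inj/cast_ord_inj.
apply/eqP; rewrite eqEsubset; apply/andP; split; apply/subsetP => C; last first.
  by case/imset2P => i k _ _ ->; apply/rot_stable/(proj1 (AP i)).
move=> Co; have orbit_C : rot_orbit C \in orbits by apply: imset_f.
pose i := cast_ord card_orbits (enum_rank_in orbit_C (rot_orbit C)).
have : C \in rot_orbit (A i) by rewrite (proj2 (AP i)) /e cast_ordK enum_rankK_in ?rot_orbit_id.
by case/imsetP => k _ ->; apply/imset2P; exists i k.
Qed.

Theorem rot_stable_setpart_reps s : #|omega| = s * p ->
  exists (delta : 'I_s -> {set 'I_n}) (A : 'I_s -> {set T}),
    [/\ setpart_k_a [set delta i | i : 'I_s] [set: 'I_n] s a,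
        forall i, A i \in omega,
        forall i j, #|A i :&: Oblock p j| = (j \in delta i) &
        omega = [set rot k (A i) | i : 'I_s, k : 'I_p]].
Proof.
move=> /exists_rot_orbit_reps[A [Ao A_inj omegaE]].
have /and3P[/eqP omega_cover _ omega_nz] := omega_part.
pose delta i := block_of @: A i.
have delta_disj i i' j : j \in delta i -> j \in delta i' -> i = i'.
  case/imsetP => x xA ->; case/imsetP => y yA /esym xy.
  by apply/A_inj/esym/(rot_orbit_block (Ao i) (Ao i') xA yA).
have delta_nz i : exists j, j \in delta i.
  have /set0Pn[x xA] : A i != set0 by apply: contraTneq (Ao i) => ->.
  by exists (block_of x); apply: imset_f.
have delta_cover j : exists i, j \in delta i.
  have lt_jp : j * p < n * p by rewrite ltn_pmul2r.
  have : Ordinal lt_jp \in cover omega by rewrite omega_cover inE.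
  rewrite omegaE => /bigcupP[_ /imset2P[i k _ _ ->] /imsetP[y yA jy]].
  exists i; apply/imsetP; exists y => //.
  by have := congr1 block_of jy; rewrite block_of_sigmaX => <-; apply: val_inj; rewrite /= mulnK.
exists delta, A; split=> // [|i j]; last by rewrite card_setI_Oblock //; apply: block_of_inj.
apply/and3P; split; [apply/and3P; split | | ].
- apply/eqP/setP => j; rewrite inE; have [i ji] := delta_cover j.
  by apply/bigcupP; exists (delta i) => //; apply: imset_f.
- apply/trivIsetP => _ _ /imsetP[i _ ->] /imsetP[i' _ ->].
  rewrite -setI_eq0; apply: contraNT => /set0Pn[j /setIP[ji ji']].
  by rewrite (delta_disj _ _ _ ji ji').
- by apply/imsetP => -[i _ delta_i0]; have [j] := delta_nz i; rewrite -delta_i0 inE.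
- rewrite card_imset ?card_ord // => i i' eq_delta.
  by have [j ji] := delta_nz i; apply: (delta_disj _ _ j) => //; rewrite -eq_delta.
- apply/forall_inP => _ /imsetP[i _ ->].
  by rewrite card_in_imset ?omega_card //; apply: block_of_inj.
Qed.

End RotStable.

End Sigma.

Theorem lemma3p2 (p a s : nat) (omega : {set {set 'I_(a * s * p)}}) :
  prime p -> odd p -> a < p ->
  setpart_k_a omega [set: 'I_(a * s * p)] (s * p) a ->
  ((forall g, g \in R_grp (a * s) p -> setpart_act omega g = omega) <->
   exists (delta : 'I_s -> {set 'I_(a * s)}) (A : 'I_s -> {set 'I_(a * s * p)}),
     [/\ setpart_k_a [set delta i | i : 'I_s] [set: 'I_(a * s)] s a,
         forall i, A i \in omega,
         forall i j, #|A i :&: Oblock p j| = (j \in delta i) &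
         omega = [set (fun x => (sigma_perm (a * s) p ^+ k)%g x) @: A i
                   | i : 'I_s, k : 'I_p]]).
Proof.
move=> p_prime _ a_lt_p /and3P[omega_part /eqP card_omega /forall_inP card_B].
have p_gt0 := prime_gt0 p_prime.
split=> [omega_fixed | [delta [A [_ _ _ ->]]]]; last exact: rot_orbits_fixed.
have rot_stable k B : B \in omega -> rot k B \in omega.
  by rewrite -{2}(omega_fixed _ (mem_cycle _ k)); apply: imset_f.
apply: (rot_stable_setpart_reps p_gt0 rot_stable p_prime omega_part _ a_lt_p card_omega).
by move=> B /card_B/eqP.
Qed.
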